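(* In a Gibbs-type feature model with parameters $\alpha<1$, $\theta>-\alpha$ and weights $(V_{n,k})$, for every $n\ge1$ and $k\ge0$: if $\alpha<0$, $$P(K_n=k)=V_{n,k}\Big\{\frac{(\theta+\alpha)_n-(\theta)_n}{\alpha}\Big\}^k;$$ if $\alpha\in[0,1)$, $$P(K_n=k)=V_{n,k}\big\{g_n(\theta,\alpha)\,(\theta+1)_{n-1}\big\}^k,\qquad g_n(\theta,\alpha)=\sum_{i=1}^n\frac{(\theta+\alpha)_{i-1}}{(\theta+1)_{i-1}}.$$
   Context: Notation: $(x)_m=\Gamma(x+m)/\Gamma(x)$ (Pochhammer symbol); $[n]=\{1,\dots,n\}$. Individuals $i=1,2,\dots$ each display a finite (possibly empty) set of features, identified by almost surely distinct labels. For the sample $\mathbf Z^{(n)}=(Z_1,\dots,Z_n)$ of the first $n$ individuals, $K_n$ is the number of distinct features displayed, labelled $X_1,\dots,X_{K_n}$ in order of appearance; $A_{i,\ell}\in\{0,1\}$ indicates whether individual $i$ displays $X_\ell$, and $m_\ell=\sum_{i=1}^nA_{i,\ell}\in[n]$. The ordered feature allocation is $F_n=(B_{n,1},\dots,B_{n,K_n})$, $B_{n,\ell}=\{i\in[n]:A_{i,\ell}=1\}$. The model admits an exchangeable feature probability function (EFPF) if there are symmetric functions $\pi_n:\bigcup_{k\ge0}[n]^k\to[0,1]$ with $P(F_n=f_n)=\pi_n(m_1,\dots,m_k)$ for every ordered feature allocation $f_n$ of $[n]$ (a sequence of $k$ nonempty subsets of $[n]$ with sizes $m_1,\dots,m_k$),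 all orderings of the same collection of sets being equally likely; the laws for different $n$ are consistent. The model is a Gibbs-type feature model with parameters $\alpha<1$, $\theta>-\alpha$ if $\pi_n(m_1,\dots,m_k)=V_{n,k}\prod_{\ell=1}^k(1-\alpha)_{m_\ell-1}(\theta+\alpha)_{n-m_\ell}$ for nonnegative weights $(V_{n,k})_{n\ge1,k\ge0}$ satisfying $V_{n,k}=\sum_{j\ge0}\frac{(k+j)!}{j!\,k!}\{(\theta+\alpha)_n\}^j(\theta+n)^kV_{n+1,k+j}$. *)

From HB Require Import structures.
From mathcomp Require Import all_boot all_order all_algebra.
From mathcomp Require Import all_classical all_reals all_analysis.
Set Implicit Arguments. Unset Strict Implicit. Unset Printing Implicit Defensive.
Import Order.TTheory GRing.Theory Num.Theory.
Import numFieldNormedType.Exports.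
Local Open Scope classical_set_scope.
Local Open Scope ring_scope.

Definition poch {R : realType} (x : R) (m : nat) : R :=
  \prod_(i < m) (x + i%:R).

(* An ordered feature allocation of [n] with k features: a sequence of k
   nonempty subsets of [n] (represented by 'I_n). *)
Definition is_ofa (n k : nat) (f : k.-tuple {set 'I_n}) : bool :=
  all (fun B : {set 'I_n} => B != finset.set0) f.

Definition gibbs_efpf {R : realType} (alpha theta : R) (V : nat -> nat -> R)
    (n : nat) (ms : seq nat) : R :=
  V n (size ms) *
  \prod_(m <- ms) (poch (1 - alpha) (m - 1) * poch (theta + alpha) (n - m)).

Definition restrict_ofa (n : nat) (f : seq {set 'I_n.+1}) : seq {set 'I_n} :=
  seq.filter (fun B : {set 'I_n} => B != finset.set0)
    (map (fun B : {set 'I_n.+1} => finset (fun i : 'I_n => widen_ord (leqnSn n) i \in B)) f).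

(* P(K_n = k), where pF n k f = P(F_n = f) for f a k-tuple of subsets of [n]. *)
Definition prob_K {R : realType} (pF : forall n k : nat, k.-tuple {set 'I_n} -> R)
    (n k : nat) : R :=
  \sum_(f : k.-tuple {set 'I_n} | is_ofa f) pF n k f.

Definition gibbs_feature_model {R : realType} (alpha theta : R)
    (V : nat -> nat -> R) (pF : forall n k : nat, k.-tuple {set 'I_n} -> R) : Prop :=
      (forall n k, 0 <= V n k) /\
      (forall n k, (0 < n)%N ->
         (fun N : nat => \sum_(j < N)
            (((k + j)`!)%:R / ((j`!)%:R * (k`!)%:R)) *
            (poch (theta + alpha) n) ^+ j * (theta + n%:R) ^+ k * V n.+1 (k + j))%R
         @ \oo --> V n k) /\
      (forall n k f, 0 <= pF n k f) /\
      (forall n k f, (0 < n)%N -> ~~ is_ofa f -> pF n k f = 0) /\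
      (forall n, (0 < n)%N ->
         (fun N : nat => \sum_(k < N) \sum_(f : k.-tuple {set 'I_n}) pF n k f)
         @ \oo --> (1 : R)) /\
      (* consistency: the law of F_n is the marginal of the law of F_{n+1} *)
      (forall n k (f : k.-tuple {set 'I_n}), (0 < n)%N -> is_ofa f ->
         (fun N : nat => \sum_(k' < N)
            \sum_(f' : k'.-tuple {set 'I_n.+1} | is_ofa f' && (restrict_ofa f' == val f))
               pF n.+1 k' f')
         @ \oo --> pF n k f) /\
      (forall n k (f : k.-tuple {set 'I_n}), (0 < n)%N -> is_ofa f ->
         pF n k f = gibbs_efpf alpha theta V n (map (fun B : {set 'I_n} => #|B|) (val f))).

From HB Require Import structures.
From mathcomp Require Import all_boot all_order all_algebra.
From mathcomp Require Import all_classical all_reals all_analysis.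
From mathcomp Require Import ring lra.
Import Order.TTheory GRing.Theory Num.Theory.
Local Open Scope ring_scope.

(* Summing the Gibbs EFPF over ordered feature allocations factorises as
   P(K_n = k) = V_{n,k} S^k, where
   S = sum_{m=1}^n C(n,m) (1-alpha)_{m-1} (theta+alpha)_{n-m}
   is the total weight of one nonempty feature.  Since
   (-alpha) (1-alpha)_{m-1} = (-alpha)_m, the Chu-Vandermonde identity gives
   -alpha S = (theta)_n - (theta+alpha)_n, which is the case alpha < 0.  For
   alpha >= 0, where one cannot divide by alpha, S and
   g_n(theta,alpha) (theta+1)_{n-1} both satisfy the recursion
   s_{n+1} = (theta+n) s_n + (theta+alpha)_n with s_1 = 1. *)

Section Pochhammer.
Variable R : realType.
Implicit Types (x y a : R).

Lemma poch0 x : poch x 0 = 1.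
Proof. by rewrite /poch big_ord0. Qed.

Lemma pochS x m : poch x m.+1 = poch x m * (x + m%:R).
Proof. by rewrite /poch big_ord_recr. Qed.

Lemma poch_recl x m : poch x m.+1 = x * poch (x + 1) m.
Proof.
rewrite /poch big_ord_recl addr0; congr (_ * _).
by apply: eq_bigr => i _; rewrite /bump /= -nat1r addrA.
Qed.

Lemma poch_gt0 x m : 0 < x -> 0 < poch x m.
Proof.
move=> x_gt0; apply: prodr_gt0 => i _.
by rewrite (lt_le_trans x_gt0) // lerDl.
Qed.

Lemma poch_vandermonde x y n : poch (x + y) n =
  \sum_(0 <= m < n.+1) 'C(n, m)%:R * poch x m * poch y (n - m).
Proof.
elim: n => [|n IH]; first by rewrite big_nat1 !poch0 bin0 !mulr1.
rewrite pochS IH big_distrl /=.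
have split_factor m : (m <= n)%N ->
    'C(n, m)%:R * poch x m * poch y (n - m) * (x + y + n%:R) =
    'C(n, m)%:R * poch x m.+1 * poch y (n - m) +
    'C(n, m)%:R * poch x m * poch y (n.+1 - m).
  by move=> le_mn; rewrite (subSn le_mn) !pochS natrB //; ring.
rewrite (eq_big_nat _ _ (fun m (hm : (0 <= m < n.+1)%N) => split_factor m hm)).
rewrite big_split /= [RHS]big_nat_recl // bin0 poch0 subn0 !mul1r.
under [X in _ = _ + X]eq_bigr do rewrite binS natrD subSS !mulrDl.
rewrite big_split /= [X in _ + X = _]big_nat_recl // bin0 poch0 subn0 !mul1r.
rewrite [X in _ = _ + (X + _)]big_nat_recr //= bin_small // !mul0r addr0.
under [X in _ + (_ + X) = _]eq_bigr do rewrite subSS.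
ring.
Qed.

Lemma poch_vandermonde_ge1 x y n :
  \sum_(0 <= j < n) 'C(n, j.+1)%:R * poch x j.+1 * poch y (n - j.+1) =
  poch (x + y) n - poch y n.
Proof.
by rewrite poch_vandermonde big_nat_recl // bin0 poch0 subn0 !mul1r addrC addKr.
Qed.

Definition vandermonde_tail a y n :=
  \sum_(0 <= j < n) 'C(n, j.+1)%:R * poch a j * poch y (n - j.+1).

Lemma mul_vandermonde_tail x y n :
  x * vandermonde_tail (x + 1) y n = poch (x + y) n - poch y n.
Proof.
rewrite -poch_vandermonde_ge1 /vandermonde_tail big_distrr /=.
by apply: eq_bigr => j _; rewrite poch_recl; ring.
Qed.

Lemma vandermonde_tailS a y n :
  vandermonde_tail a y n.+1 = (a + y + n%:R - 1) * vandermonde_tail a y n + poch y n.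
Proof.
rewrite /vandermonde_tail.
under eq_bigr do rewrite binS natrD subSS !mulrDl.
rewrite big_split /= -poch_vandermonde.
rewrite big_nat_recr //= bin_small // !mul0r addr0.
have shift_factor j : (j < n)%N ->
    'C(n, j.+1)%:R * poch a j * poch y (n - j) =
    (a + y + n%:R - 1) * ('C(n, j.+1)%:R * poch a j * poch y (n - j.+1))
    - 'C(n, j.+1)%:R * poch a j.+1 * poch y (n - j.+1).
  move=> lt_jn; rewrite -[(n - j)%N]subSS (subSn lt_jn) !pochS natrB //.
  by rewrite [(j.+1)%:R]mulrSr; ring.
rewrite (eq_big_nat _ _ (fun j (hj : (0 <= j < n)%N) => shift_factor j hj)).
rewrite sumrB -big_distrr /= poch_vandermonde_ge1; ring.
Qed.

Lemma vandermonde_tail_ratio_sum a y n : 0 < a + y ->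
  (\sum_(1 <= i < n.+2) poch y (i - 1) / poch (a + y) (i - 1)) * poch (a + y) n =
  vandermonde_tail a y n.+1.
Proof.
move=> ay_gt0; elim: n => [|n IH].
  by rewrite big_nat1 /vandermonde_tail big_nat1 !poch0 bin1 divr1 !mulr1.
rewrite big_nat_recr // subSS subn0 mulrDl divfK ?gt_eqF ?poch_gt0 //.
by rewrite pochS mulrA IH [RHS]vandermonde_tailS -natr1; ring.
Qed.
End Pochhammer.
Arguments vandermonde_tail {R}.
Arguments mul_vandermonde_tail {R}.

Lemma sum_tuple_prod (R : pzSemiRingType) (T : finType) (F : T -> R) k :
  \sum_(t : k.-tuple T) \prod_(x <- t) F x = (\sum_x F x) ^+ k.
Proof.
elim: k => [|k IH].
  rewrite (big_pred1 [tuple]) => [|t]; last by apply/esym/eqP/val_inj; case: t => -[].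
  by rewrite big_nil expr0.
pose cons_tuple (p : T * k.-tuple T) : k.+1.-tuple T := [tuple of p.1 :: p.2].
have cons_tuple_bij : bijective cons_tuple.
  exists (fun t => (thead t, [tuple of behead t])) => [[x t]|t] /=.
    by rewrite theadE; congr pair; apply: val_inj.
  by rewrite [RHS]tuple_eta.
rewrite (reindex cons_tuple) /=; last exact: onW_bij.
rewrite -(pair_big xpredT xpredT (fun x (t : k.-tuple T) => \prod_(y <- x :: t) F y)) /=.
rewrite exprS big_distrl /=; apply: eq_bigr => x _.
by under eq_bigr do rewrite big_cons; rewrite -big_distrr IH.
Qed.

Lemma sum_all_tuple_prod (R : pzSemiRingType) (T : finType) (P : pred T)
    (F : T -> R) k :
  \sum_(t : k.-tuple T | all P t) \prod_(x <- t) F x = (\sum_(x | P x) F x) ^+ k.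
Proof.
rewrite big_mkcond (big_mkcond P) -sum_tuple_prod; apply: eq_bigr => t _.
elim: (val t) => [|x s IH] /=; first by rewrite !big_nil.
rewrite !big_cons; case: (P x); last by rewrite mul0r.
by rewrite -IH; case: (all P s); rewrite ?mulr0.
Qed.

Lemma sum_set_card (V : nmodType) (T : finType) (F : nat -> V) :
  \sum_(A : {set T}) F #|A| = \sum_(m < #|T|.+1) F m *+ 'C(#|T|, m).
Proof.
rewrite (partition_big (fun A : {set T} => inord #|A| : 'I_#|T|.+1) xpredT) //=.
apply: eq_bigr => m _.
rewrite (eq_bigl (fun A : {set T} => #|A| == m)) => [|A]; last first.
  by rewrite -val_eqE /= inordK // ltnS max_card.
rewrite (eq_bigr (fun _ => F m)) => [|A /eqP ->] //.
by rewrite sumr_const -card_draws cardsE.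
Qed.

Lemma prob_K_gibbs_efpf (R : realType) (alpha theta : R) (V : nat -> nat -> R)
    (pF : forall n k : nat, k.-tuple {set 'I_n} -> R) n k :
  (forall f : k.-tuple {set 'I_n}, is_ofa f ->
     pF n k f = gibbs_efpf alpha theta V n (map (fun B : {set 'I_n} => #|B|) f)) ->
  prob_K pF n k = V n k * vandermonde_tail (1 - alpha) (theta + alpha) n ^+ k.
Proof.
move=> efpf.
pose w m := poch (1 - alpha) (m - 1) * poch (theta + alpha) (n - m).
rewrite /prob_K (eq_bigr (fun f : k.-tuple {set 'I_n} =>
  V n k * \prod_(B <- f) w #|B|)) => [|f ofa_f].
  rewrite -big_distrr /= sum_all_tuple_prod; congr (_ * _ ^+ _).
  rewrite big_mkcond /=.
  under eq_bigr do rewrite -cards_eq0.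
  rewrite (sum_set_card _ _ (fun m => if m != 0%N then w m else 0)).
  rewrite card_ord big_ord_recl /= mul0rn add0r.
  rewrite /vandermonde_tail big_mkord; apply: eq_bigr => j _.
  by rewrite /w /bump /= add1n subSS subn0 -mulrA mulr_natl.
by rewrite (efpf f ofa_f) /gibbs_efpf size_map size_tuple big_map.
Qed.

Theorem theorem2 (R : realType) (alpha theta : R) (V : nat -> nat -> R)
    (pF : forall n k : nat, k.-tuple {set 'I_n} -> R) :
  alpha < 1 -> - alpha < theta ->
  gibbs_feature_model alpha theta V pF ->
  forall n k : nat, (1 <= n)%N ->
    (alpha < 0 ->
       prob_K pF n k =
       V n k * ((poch (theta + alpha) n - poch theta n) / alpha) ^+ k) /\
    (0 <= alpha ->
       prob_K pF n k =
       V n k * ((\sum_(1 <= i < n.+1)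
                   poch (theta + alpha) (i - 1) / poch (theta + 1) (i - 1))
                * poch (theta + 1) (n - 1)) ^+ k).
Proof.
move=> alpha_lt1 theta_gt [_ [_ [_ [_ [_ [_ efpf]]]]]] n k n_gt0.
have -> : prob_K pF n k =
    V n k * vandermonde_tail (1 - alpha) (theta + alpha) n ^+ k.
  by apply: prob_K_gibbs_efpf => f; apply: efpf.
split=> [alpha_lt0 | alpha_ge0].
  have := mul_vandermonde_tail (- alpha) (theta + alpha) n.
  rewrite [- alpha + 1]addrC addrCA addNr addr0 mulNr.
  move=> /(congr1 -%R); rewrite opprK opprB => <-.
  by rewrite [alpha * _]mulrC mulfK ?lt_eqF.
have -> : theta + 1 = (1 - alpha) + (theta + alpha) by ring.
case: n n_gt0 => // n _.
by rewrite subSS subn0 vandermonde_tail_ratio_sum //; lra.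
Qed.
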